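(* Let $p, \sigma \in \mathbb{R}$. The equation \[ -u''(x) = x^\sigma u(x)^p \quad \text{in } (0,+\infty) \] admits at least one non-trivial, non-negative solution $u \in C^2(0,+\infty)$ if and only if one of the following holds: (1) $\sigma < -2$ and $p > -1-\sigma$; or (2) $\sigma > -2$ and $p < -1-\sigma$.
   Context: Solutions are only required to be $C^2$ on the open half-line $(0,+\infty)$ and to satisfy the equation pointwise there; no continuity at $0$ is assumed. For $p=0$ the term $u^p$ is understood as $1$, and for $p<0$ it is required that $u>0$ on $(0,+\infty)$. *)

From HB Require Import structures.
From mathcomp Require Import all_boot all_order all_algebra.
From mathcomp Require Import all_classical all_reals all_analysis.
Set Implicit Arguments. Unset Strict Implicit. Unset Printing Implicit Defensive.
Import Order.TTheory GRing.Theory Num.Theory.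
Import numFieldNormedType.Exports.
Local Open Scope ring_scope.

Definition C2_pos (R : realType) (u : R -> R) : Prop :=
  forall x : R, 0 < x ->
    [/\ derivable u x 1, derivable (derive1 u) x 1 & {for x, continuous (derive1 (derive1 u))}].

(* u is a non-trivial non-negative C^2 solution of -u'' = x^sigma u^p on (0,+oo).
   powR a b = a `^ b: for a > 0 it is exp (b ln a); powR 0 0 = 1, powR 0 b = 0
   for b <> 0.  For p < 0 positivity of u on (0,+oo) is required. *)
Definition is_nontriv_nonneg_sol (R : realType) (p sigma : R) (u : R -> R) : Prop :=
  [/\ C2_pos u,
      (forall x : R, 0 < x -> 0 <= u x),
      (exists x : R, 0 < x /\ u x != 0),
      (p < 0 -> forall x : R, 0 < x -> 0 < u x) &
      (forall x : R, 0 < x -> - (derive1 (derive1 u)) x = powR x sigma * powR (u x) p)].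

From HB Require Import structures.
From mathcomp Require Import all_boot all_order all_algebra.
From mathcomp Require Import all_classical all_reals all_analysis.
From mathcomp Require Import ring lra.
Import Order.TTheory GRing.Theory Num.Theory.
Import numFieldNormedType.Exports.
Local Open Scope ring_scope.
Local Open Scope classical_set_scope.

(* A nonnegative solution u is concave and nondecreasing with x u' <= u, so
   u(x)/x is nonincreasing and u > 0.  The mean value theorem for u' on
   [x, 2x] gives the a priori bound x^(sigma+2) u(x)^(p-1) <= 2^(|sigma|+|p|);
   as ln u grows at most like ln x, letting x -> 0 and x -> +oo forces
   sigma + 2 and (1 - p) - (sigma + 2) to have the same sign.  On the two
   borderlines sigma = -2 and sigma = -1 - p the bound only leaves
   -u'' >= c/x^2 or -u'' >= c/x near 0 or near +oo, which integrates to a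
   contradiction with u >= 0, u' >= 0 or a bound on u; the Euler equation
   -x^2 u'' = u is excluded through the Riccati variable x u'/u.  Conversely
   C x^b with b = (sigma + 2)/(1 - p) in (0, 1) is a solution. *)

Section RayArithmetic.
Variable R : realFieldType.

Lemma slope_le0 (a b : R) : (forall t, 0 <= t -> a * t <= b) -> a <= 0.
Proof.
move=> H; rewrite leNgt; apply/negP => a0.
have t0 : 0 <= (`|b| + 1) / a by rewrite divr_ge0 ?ltW // ltr_wpDl.
have := H _ t0; rewrite mulrC divfK ?gt_eqF //.
by have := ler_norm b; lra.
Qed.

(* Let t -> +oo and t -> -oo; the sign of q decides which bound on L applies. *)
Lemma exponent_balance (s q k A : R) (L : R -> R) :
  (forall t, s * t - k <= q * L t) ->
  (forall t, 0 <= t -> A <= L t <= A + t) ->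
  (forall t, t <= 0 -> A + t <= L t <= A) ->
  0 <= s * (q - s).
Proof.
move=> H Hp Hn.
have [Hp' Hn'] : (forall t, 0 <= t -> [/\ s * t - k <= q * L t, A <= L t & L t <= A + t])
    /\ (forall t, 0 <= t -> [/\ s * - t - k <= q * L (- t), A - t <= L (- t) & L (- t) <= A]).
  split=> t t0; first by have /andP[] := Hp t t0.
  by have /andP[] : A + - t <= L (- t) <= A by apply: Hn; rewrite oppr_le0.
case: (lerP 0 q) => q0.
- have sq : s - q <= 0.
    by apply: (@slope_le0 _ (k + q * A)) => t /Hp'[]; nra.
  have s0 : - s <= 0.
    by apply: (@slope_le0 _ (k + q * A)) => t /Hn'[]; nra.
  nra.
- have s0 : s <= 0.
    by apply: (@slope_le0 _ (k + q * A)) => t /Hp'[]; nra.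
  have sq : q - s <= 0.
    by apply: (@slope_le0 _ (k + q * A)) => t /Hn'[]; nra.
  nra.
Qed.

Lemma minr_le_mul (a lo l hi : R) : lo <= l -> l <= hi ->
  Num.min (a * lo) (a * hi) <= a * l.
Proof.
move=> lol lhi; case: (lerP 0 a) => a0.
- by rewrite ge_min (ler_wpM2l a0 lol).
- by rewrite ge_min (ler_wnM2l (ltW a0) lhi) orbT.
Qed.

End RayArithmetic.

Section HalfLineCalculus.
Context {R : realType}.
Implicit Types a b c e m x : R.

Section Increments.
Context {g : R -> R}.
Hypothesis dg : forall x, 0 < x -> derivable g x 1.

Lemma mvt_pos {a b} : 0 < a -> a < b ->
  exists2 c, a < c < b & g b - g a = derive1 g c * (b - a).
Proof.
move=> a0 ab.
have dg' x : x \in `]a, b[%R -> is_derive x 1 g (derive1 g x).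
  rewrite in_itv /= => /andP[ax _]; rewrite derive1E.
  by apply/derivableP/dg; exact: lt_trans ax.
have cg : {within `[a, b], continuous g}.
  apply: derivable_within_continuous => x; rewrite in_itv /= => /andP[ax _].
  by apply: dg; exact: lt_le_trans ax.
by have [c] := MVT ab dg' cg; rewrite in_itv; exists c.
Qed.

Lemma increment_ge_derive1 m a b : 0 < a -> a <= b ->
  (forall c, a < c < b -> m <= derive1 g c) -> m * (b - a) <= g b - g a.
Proof.
move=> a0; rewrite le_eqVlt => /predU1P[-> _|ab H]; first by rewrite !subrr mulr0.
have [c cab ->] := mvt_pos a0 ab.
by rewrite ler_pM2r ?subr_gt0 // H.
Qed.

Lemma increment_le_derive1 m a b : 0 < a -> a <= b ->
  (forall c, a < c < b -> derive1 g c <= m) -> g b - g a <= m * (b - a).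
Proof.
move=> a0; rewrite le_eqVlt => /predU1P[-> _|ab H]; first by rewrite !subrr mulr0.
have [c cab ->] := mvt_pos a0 ab.
by rewrite ler_pM2r ?subr_gt0 // H.
Qed.

End Increments.

Section LogIncrements.
Context {g : R -> R}.
Hypothesis dg : forall x, 0 < x -> derivable g x 1.

Let shifted_derive e x : 0 < x ->
  is_derive x 1 (g - e \*: (@ln R)) (derive1 g x - e / x).
Proof.
move=> x0; rewrite derive1E.
exact: is_derive_eq (is_deriveB (derivableP (dg x x0)) (is_deriveZ e (is_derive1_ln x0))) _.
Qed.

Let shifted_derivable e x : 0 < x -> derivable (g - e \*: (@ln R)) x 1.
Proof. by move=> x0; have [] := shifted_derive e x x0. Qed.

Let shifted_derive1 e x : 0 < x -> derive1 (g - e \*: (@ln R)) x = derive1 g x - e / x.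
Proof. by move=> x0; rewrite derive1E; have [_ ->] := shifted_derive e x x0. Qed.

Lemma increment_ge_ln e a b : 0 < a -> a <= b ->
  (forall c, a < c < b -> e / c <= derive1 g c) -> e * (ln b - ln a) <= g b - g a.
Proof.
move=> a0 ab H.
suff : 0 * (b - a) <= (g - e \*: (@ln R)) b - (g - e \*: (@ln R)) a.
  have sc y : (e \*: (@ln R)) y = e * ln y by [].
  rewrite !fctE !sc; lra.
apply: (increment_ge_derive1 (shifted_derivable e)) => // c /andP[ac cb].
by rewrite shifted_derive1 ?subr_ge0 ?H ?ac // (lt_trans a0 ac).
Qed.

Lemma increment_le_ln e a b : 0 < a -> a <= b ->
  (forall c, a < c < b -> derive1 g c <= e / c) -> g b - g a <= e * (ln b - ln a).
Proof.
move=> a0 ab H.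
suff : (g - e \*: (@ln R)) b - (g - e \*: (@ln R)) a <= 0 * (b - a).
  have sc y : (e \*: (@ln R)) y = e * ln y by [].
  rewrite !fctE !sc; lra.
apply: (increment_le_derive1 (shifted_derivable e)) => // c /andP[ac cb].
by rewrite shifted_derive1 ?subr_le0 ?H ?ac // (lt_trans a0 ac).
Qed.

Lemma derive1_le_Ninv_neg e : 0 < e ->
  (forall c, 1 < c -> derive1 g c <= - e / c) -> exists2 x, 1 <= x & g x < 0.
Proof.
move=> e0 H; set x := expR ((`|g 1| + 1) / e).
have x1 : 1 <= x by rewrite -expR0 ler_expR divr_ge0 // ltW // ltr_wpDl.
exists x => //.
have : g x - g 1 <= - e * (ln x - ln 1).
  by apply: increment_le_ln => // c /andP[c1 _]; exact: H.
rewrite expRK ln1 subr0 mulNr mulrC divfK ?gt_eqF //.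
by have := ler_norm (g 1); lra.
Qed.

End LogIncrements.
End HalfLineCalculus.

Definition nonneg_concave {R : realType} (u : R -> R) :=
  forall x : R, 0 < x -> [/\ derivable u x 1, derivable (derive1 u) x 1,
                             derive1 (derive1 u) x <= 0 & 0 <= u x].

Section NonnegConcave.
Context {R : realType} {u : R -> R}.
Local Notation u' := (derive1 u).
Local Notation u'' := (derive1 (derive1 u)).
Hypothesis hu : nonneg_concave u.

Let du x : 0 < x -> derivable u x 1. Proof. by case/hu. Qed.
Let du' x : 0 < x -> derivable u' x 1. Proof. by case/hu. Qed.
Let u''_le0 x : 0 < x -> u'' x <= 0. Proof. by case/hu. Qed.
Let u_ge0 x : 0 < x -> 0 <= u x. Proof. by case/hu. Qed.

Lemma derive1_nincr {a b : R} : 0 < a -> a <= b -> u' b <= u' a.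
Proof.
move=> a0 ab; have : u' b - u' a <= 0 * (b - a).
  apply: increment_le_derive1 => // c /andP[ac _].
  exact/u''_le0/(lt_trans a0 ac).
lra.
Qed.

Lemma le_tangent {a b : R} : 0 < a -> a <= b -> u b <= u a + u' a * (b - a).
Proof.
move=> a0 ab; have : u b - u a <= u' a * (b - a).
  apply: increment_le_derive1 => // c /andP[ac _].
  exact/derive1_nincr/ltW.
lra.
Qed.

Lemma secant_ge {a b : R} : 0 < a -> a <= b -> u' b * (b - a) <= u b - u a.
Proof.
move=> a0 ab; apply: increment_ge_derive1 => // c /andP[ac cb].
exact/derive1_nincr/ltW/cb/(lt_trans a0 ac).
Qed.

Lemma derive1_ge0 {x : R} : 0 < x -> 0 <= u' x.
Proof.
move=> x0; rewrite leNgt; apply/negP => u'x_lt0.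
set y := x + (u x + 1) / - u' x.
have xy : x <= y by rewrite lerDl divr_ge0 ?oppr_ge0 ?ltW // ltr_wpDl ?u_ge0.
have := le_tangent x0 xy; have := u_ge0 _ (lt_le_trans x0 xy).
have -> : u' x * (y - x) = - (u x + 1) by rewrite /y addrAC subrr add0r; field; lra.
lra.
Qed.

Lemma u_ndecr {a b : R} : 0 < a -> a <= b -> u a <= u b.
Proof.
move=> a0 ab; have := secant_ge a0 ab.
have := mulr_ge0 (derive1_ge0 (lt_le_trans a0 ab)) (_ : 0 <= b - a).
rewrite subr_ge0 => /(_ ab); lra.
Qed.

Lemma mul_derive1_le {x : R} : 0 < x -> x * u' x <= u x.
Proof.
move=> x0; rewrite leNgt; apply/negP => ux_lt.
have u'x_gt0 : 0 < u' x by rewrite -(pmulr_rgt0 _ x0) (le_lt_trans (u_ge0 _ x0)).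
set a := (x * u' x - u x) / (2 * u' x).
have a0 : 0 < a by rewrite divr_gt0 ?subr_gt0 // mulr_gt0.
have u'a : u' x * a = (x * u' x - u x) / 2 by rewrite /a; field; rewrite gt_eqF.
have ax : a <= x.
  rewrite -(ler_pM2l u'x_gt0) u'a; have := u_ge0 _ x0; nra.
have := secant_ge a0 ax; have := u_ge0 _ a0.
rewrite mulrBr u'a [u' x * x]mulrC; lra.
Qed.

Lemma ratio_nincr {x y : R} : 0 < x -> x <= y -> x * u y <= y * u x.
Proof.
move=> x0 xy; have := le_tangent x0 xy; have := mul_derive1_le x0.
have := derive1_ge0 x0; nra.
Qed.

Lemma gt0_of_nonzero : (exists x, 0 < x /\ u x != 0) -> forall x, 0 < x -> 0 < u x.
Proof.
move=> [z [z0 uz]] x x0; rewrite lt_def u_ge0 // andbT.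
apply: contraNneq uz => ux0; rewrite eq_le u_ge0 // andbT.
case: (lerP z x) => [zx|xz]; first by rewrite -ux0 u_ndecr.
have := ratio_nincr x0 (ltW xz); rewrite ux0 mulr0; nra.
Qed.

Lemma derive1_ge_Nderive2 (m x : R) : 0 < x ->
  (forall c, x < c < 2 * x -> m <= - u'' c) -> m * x <= u' x.
Proof.
move=> x0 H; have x2x : x <= 2 * x by lra.
have : u' (2 * x) - u' x <= - m * (2 * x - x).
  apply: increment_le_derive1 => // c cx; rewrite lerNr; exact: H.
have := derive1_ge0 (lt_le_trans x0 x2x); lra.
Qed.

Lemma derive1_ge_of_Nderive2_ge_inv_sqr (e x : R) : 0 < e -> 0 < x ->
  (forall c, x < c < 2 * x -> e / c ^+ 2 <= - u'' c) -> e / 4 / x <= u' x.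
Proof.
move=> e0 x0 H.
have -> : e / 4 / x = e / (4 * x ^+ 2) * x by field; rewrite gt_eqF.
apply: derive1_ge_Nderive2 => // c /andP[xc cx]; apply: le_trans (H c _); last by rewrite xc.
have c0 : 0 < c := lt_trans x0 xc.
by rewrite ler_pM2l // lef_pV2 ?posrE ?exprn_gt0 ?mulr_gt0 //; nra.
Qed.

Lemma Nderive2_not_ge_inv_pinfty {e : R} : 0 < e ->
  ~ (forall x, 1 <= x -> e / x <= - u'' x).
Proof.
move=> e0 H.
have [x x1] : exists2 x, 1 <= x & u' x < 0.
  by apply: (derive1_le_Ninv_neg du' _ e0) => c /ltW /H; rewrite mulNr lerNr.
by rewrite ltNge derive1_ge0 // (lt_le_trans ltr01 x1).
Qed.

Lemma Nderive2_not_ge_inv_0 {e B : R} : 0 < e ->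
  (forall x, 0 < x <= 1 -> u x <= B * x) ->
  ~ (forall x, 0 < x <= 1 -> e / x <= - u'' x).
Proof.
move=> e0 uB H.
set x := expR (- (`|B - u' 1| + 1) / e).
have x0 : 0 < x := expR_gt0 _.
have x1 : x <= 1.
  by rewrite -expR0 ler_expR mulNr oppr_le0 divr_ge0 // ?ltW // ltr_wpDl.
have : u' 1 - u' x <= - e * (ln 1 - ln x).
  apply: (increment_le_ln du') => // c /andP[xc c1].
  by rewrite mulNr lerNr H // (lt_trans x0 xc) ltW.
have -> : - e * (ln 1 - ln x) = - (`|B - u' 1| + 1).
  by rewrite ln1 /x expRK; field; rewrite gt_eqF.
move=> u'x; have uBx : u x <= B * x by apply: uB; rewrite x0 x1.
have : u' x <= B.
  by rewrite -(ler_pM2l x0) [x * B]mulrC (le_trans (mul_derive1_le x0)).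
have := ler_norm (B - u' 1); lra.
Qed.

Lemma Nderive2_not_ge_inv_sqr_pinfty {e B : R} : 0 < e ->
  (forall x, 1 <= x -> u x <= B) ->
  ~ (forall x, 1 <= x -> e / x ^+ 2 <= - u'' x).
Proof.
move=> e0 uB H.
set y := expR (4 * (`|B - u 1| + 1) / e).
have y1 : 1 <= y by rewrite -expR0 ler_expR divr_ge0 ?mulr_ge0 // ?ltW // ltr_wpDl.
have : e / 4 * (ln y - ln 1) <= u y - u 1.
  apply: (increment_ge_ln du) => // c /andP[c1 _].
  have c0 := lt_trans ltr01 c1.
  apply: derive1_ge_of_Nderive2_ge_inv_sqr => // d /andP[cd _].
  by apply: H; rewrite ltW // (lt_trans c1 cd).
rewrite ln1 subr0 expRK.
have -> : e / 4 * (4 * (`|B - u 1| + 1) / e) = `|B - u 1| + 1 by field; rewrite gt_eqF.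
have := uB y y1; have := ler_norm (B - u 1); lra.
Qed.

Lemma Nderive2_not_ge_inv_sqr_0 {e : R} : 0 < e ->
  ~ (forall x, 0 < x <= 1 -> e / x ^+ 2 <= - u'' x).
Proof.
move=> e0 H.
set y := expR (ln 2^-1 - 4 * (u 2^-1 + 1) / e).
have y0 : 0 < y := expR_gt0 _.
have yh : y <= 2^-1.
  rewrite -[X in _ <= X]lnK ?posrE // ler_expR gerBl divr_ge0 ?mulr_ge0 ?ltW //.
  by rewrite ltr_wpDl ?u_ge0.
have : e / 4 * (ln 2^-1 - ln y) <= u 2^-1 - u y.
  apply: (increment_ge_ln du) => // c /andP[yc ch].
  have c0 := lt_trans y0 yc.
  apply: derive1_ge_of_Nderive2_ge_inv_sqr => // d /andP[cd dc].
  by apply: H; rewrite (lt_trans c0 cd) /=; lra.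
rewrite expRK.
have -> : e / 4 * (ln 2^-1 - (ln 2^-1 - 4 * (u 2^-1 + 1) / e)) = u 2^-1 + 1.
  by field; rewrite gt_eqF.
have := u_ge0 _ y0; lra.
Qed.

End NonnegConcave.

Section Solution.
Variables (R : realType) (p sigma : R) (u : R -> R).
Hypothesis sol : is_nontriv_nonneg_sol p sigma u.
Local Notation u' := (derive1 u).
Local Notation u'' := (derive1 (derive1 u)).
Local Notation k := ((`|sigma| + `|p|) * ln (2 : R)).

Let hu : nonneg_concave u.
Proof.
case: sol => C ge0 _ _ E x x0; have [du du' _] := C x x0.
by split; rewrite ?ge0 // -oppr_ge0 E // mulr_ge0 ?powR_ge0.
Qed.

Lemma sol_gt0 {x} : 0 < x -> 0 < u x.
Proof. by case: sol => _ _ nz _ _; exact: (gt0_of_nonzero hu). Qed.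

Lemma Nderive2_expR x : 0 < x -> - u'' x = expR (sigma * ln x + p * ln (u x)).
Proof.
case: sol => _ _ _ _ E x0.
by rewrite E // /powR !gt_eqF ?sol_gt0 // expRD.
Qed.

Lemma ln_sol_increment {x y} : 0 < x -> x <= y ->
  0 <= ln (u y) - ln (u x) <= ln y - ln x.
Proof.
move=> x0 xy; have y0 := lt_le_trans x0 xy.
have := ratio_nincr hu x0 xy.
rewrite -ler_ln ?posrE ?mulr_gt0 ?sol_gt0 // !lnM ?posrE ?sol_gt0 // => h.
rewrite subr_ge0 ler_ln ?posrE ?sol_gt0 // (u_ndecr hu) //=.
lra.
Qed.

Lemma ln_rhs_shift x c : 0 < x -> x <= c <= 2 * x ->
  sigma * ln x + p * ln (u x) - k <= sigma * ln c + p * ln (u c).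
Proof.
move=> x0 /andP[xc c2x]; have c0 := lt_le_trans x0 xc.
have /andP[du0 du1] := ln_sol_increment x0 xc.
have dx0 : 0 <= ln c - ln x by rewrite subr_ge0 ler_ln ?posrE.
have dx1 : ln c - ln x <= ln 2.
  by rewrite lerBlDr -lnM ?posrE // ler_ln ?posrE ?mulr_gt0.
have /andP[sl su] : - `|sigma| <= sigma <= `|sigma| by rewrite -ler_norml.
have /andP[pl pu] : - `|p| <= p <= `|p| by rewrite -ler_norml.
nra.
Qed.

(* MVT for u' on [x, 2x] and x u' <= u give x^2 (-u''(c)) <= u(x) for some
   c in (x, 2x), and ln (-u'') moves by at most k between x and c. *)
Lemma ln_sol_lbound {x} : 0 < x -> (sigma + 2) * ln x - k <= (1 - p) * ln (u x).
Proof.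
move=> x0; set m := expR (sigma * ln x + p * ln (u x) - k).
have mx : m * x <= u' x.
  apply: (derive1_ge_Nderive2 hu) => // c /andP[xc cx].
  rewrite Nderive2_expR ?ler_expR ?ln_rhs_shift ?(lt_trans x0 xc) //.
  by rewrite !ltW.
have : m * x * x <= u x.
  by apply: le_trans (mul_derive1_le hu x0); rewrite mulrC ler_pM2l.
rewrite -ler_ln ?posrE ?mulr_gt0 ?expR_gt0 ?sol_gt0 // !lnM ?posrE ?mulr_gt0 ?expR_gt0 //.
rewrite expRK; lra.
Qed.

Lemma exponent_sign : 0 <= (sigma + 2) * ((1 - p) - (sigma + 2)).
Proof.
apply: (@exponent_balance _ _ _ k (ln (u 1)) (fun t => ln (u (expR t)))).
- by move=> t; have := ln_sol_lbound (expR_gt0 t); rewrite expRK.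
- move=> t t0; have t1 : 1 <= expR t by rewrite -expR0 ler_expR.
  have /andP[] := ln_sol_increment ltr01 t1; rewrite expRK ln1 subr0.
  by move=> h1 h2; apply/andP; split; lra.
- move=> t t0; have t1 : expR t <= 1 by rewrite -expR0 ler_expR.
  have /andP[] := ln_sol_increment (expR_gt0 t) t1; rewrite expRK ln1 sub0r.
  by move=> h1 h2; apply/andP; split; lra.
Qed.

Lemma Nderive2_ge_inv_pow n C x : 0 < x ->
  C - n%:R * ln x <= sigma * ln x + p * ln (u x) -> expR C / x ^+ n <= - u'' x.
Proof.
move=> x0 H; have xp : x \in Num.pos by rewrite posrE.
by rewrite Nderive2_expR // -{1}(lnK xp) -expRM_natl -expRB ler_expR.
Qed.

Lemma not_euler_equation : sigma = -2 -> p = 1 -> False.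
Proof.
move=> s2 p1.
have u''E x : 0 < x -> u'' x = - (u x / x ^+ 2).
  case: sol => _ _ _ _ E x0; rewrite -[u'' x]opprK E // s2 p1.
  by rewrite powRN powR_mulrn ?ltW // powRr1 ?ltW ?sol_gt0 // mulrC.
(* x r' = -(r^2 - r + 1) <= -3/4, so r decreases like -3/4 ln x. *)
pose r y := y * u' y / u y.
have dr (x : R) : 0 < x -> is_derive x 1 r (- (r x ^+ 2 - r x + 1) / x).
  move=> x0; have ux := sol_gt0 x0.
  have [du du' _ _] := hu x x0.
  have hu'' : is_derive x 1 u' (u'' x) by rewrite derive1E; exact: derivableP.
  have hu' : is_derive x 1 u (u' x) by rewrite derive1E; exact: derivableP.
  have -> : r = (id * u') * (fun y => (u y)^-1) by [].
  apply: is_derive_eq (is_deriveM (is_deriveM (is_derive_id x 1) hu'') (is_deriveV _ hu')) _.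
    by rewrite gt_eqF.
  have sc (a b : R) : a *: b = a * b by [].
  by rewrite u''E // !sc mulr1 !fctE /=; field; rewrite !gt_eqF.
have [x x1] : exists2 x, 1 <= x & r x < 0.
  apply: (@derive1_le_Ninv_neg _ r _ (3 / 4)) => // [y y0|c c1].
    by have [] := dr y y0.
  have c0 := lt_trans ltr01 c1.
  rewrite derive1E; have [_ ->] := dr c c0.
  rewrite ler_pM2r ?invr_gt0 //; have := sqr_ge0 (r c - 1 / 2); lra.
have x0 := lt_le_trans ltr01 x1.
by rewrite ltNge /r !mulr_ge0 ?(derive1_ge0 hu x0) ?invr_ge0 ?ltW ?sol_gt0.
Qed.

Lemma sigma_neq_Ntwo : sigma + 2 != 0.
Proof.
apply/negP => /eqP s0; have s2 : sigma = -2 by lra.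
have lb x : 0 < x -> - k <= (1 - p) * ln (u x).
  by move=> x0; have := ln_sol_lbound x0; rewrite s0 mul0r sub0r.
case: (ltgtP p 1) => [p_lt1|p_gt1|p1]; last exact: not_euler_equation s2 p1.
- set C := Num.min (p * (- k / (1 - p))) (p * ln (u 1)).
  apply: (Nderive2_not_ge_inv_sqr_0 hu (expR_gt0 C)) => x /andP[x0 x1].
  apply: Nderive2_ge_inv_pow => //.
  have l1 : - k / (1 - p) <= ln (u x).
    by rewrite ler_pdivrMr ?subr_gt0 // [_ * (1 - p)]mulrC; exact: lb.
  have /andP[l2 _] := ln_sol_increment x0 x1.
  have := @minr_le_mul _ p _ _ (ln (u 1)) l1; rewrite -subr_ge0 => /(_ l2).
  rewrite -/C s2; lra.
- apply: (Nderive2_not_ge_inv_sqr_pinfty hu (expR_gt0 (p * ln (u 1))) (B := expR (k / (p - 1)))).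
  + move=> x x1; have ux := sol_gt0 (lt_le_trans ltr01 x1).
    rewrite -[u x]lnK ?posrE // ler_expR ler_pdivlMr ?subr_gt0 //.
    by have := lb x (lt_le_trans ltr01 x1); lra.
  + move=> x x1; apply: Nderive2_ge_inv_pow; first exact: lt_le_trans ltr01 x1.
    have /andP[l1 _] := ln_sol_increment ltr01 x1.
    have : p * ln (u 1) <= p * ln (u x) by rewrite ler_wpM2l; lra.
    rewrite s2; lra.
Qed.

Lemma sigma_neq_critical : sigma + 2 != 1 - p.
Proof.
apply/negP => /eqP sq.
have p1 : p != 1 by apply: contraNneq sigma_neq_Ntwo => p1; rewrite sq p1 subrr.
have lb x : 0 < x -> - k <= (1 - p) * (ln (u x) - ln x).
  by move=> x0; have := ln_sol_lbound x0; rewrite sq mulrBr; lra.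
have rhs x : sigma * ln x + p * ln (u x) = - ln x + p * (ln (u x) - ln x).
  have -> : sigma = -1 - p by lra.
  by ring.
case: (ltgtP p 1) => [p_lt1|p_gt1|/eqP]; last by rewrite (negbTE p1).
- set C := Num.min (p * (- k / (1 - p))) (p * ln (u 1)).
  apply: (Nderive2_not_ge_inv_pinfty hu (expR_gt0 C)) => x x1.
  have x0 := lt_le_trans ltr01 x1.
  have := @Nderive2_ge_inv_pow 1 C x x0; rewrite expr1; apply.
  have l1 : - k / (1 - p) <= ln (u x) - ln x.
    by rewrite ler_pdivrMr ?subr_gt0 // [_ * (1 - p)]mulrC; exact: lb.
  have /andP[_] := ln_sol_increment ltr01 x1; rewrite ln1 subr0 => l2.
  have {}l2 : ln (u x) - ln x <= ln (u 1) by lra.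
  have := @minr_le_mul _ p _ _ (ln (u 1)) l1 l2.
  rewrite -/C rhs; lra.
- apply: (Nderive2_not_ge_inv_0 hu (expR_gt0 (p * ln (u 1))) (B := expR (k / (p - 1)))).
  + move=> x /andP[x0 x1]; have ux := sol_gt0 x0.
    rewrite -[u x]lnK ?posrE // -{2}(lnK (_ : x \in Num.pos)) ?posrE // -expRD ler_expR.
    have : ln (u x) - ln x <= k / (p - 1) by rewrite ler_pdivlMr ?subr_gt0 //; have := lb x x0; lra.
    lra.
  + move=> x /andP[x0 x1].
    have := @Nderive2_ge_inv_pow 1 (p * ln (u 1)) x x0; rewrite expr1; apply.
    have /andP[_] := ln_sol_increment x0 x1; rewrite ln1 sub0r => l.
    have : p * ln (u 1) <= p * (ln (u x) - ln x) by rewrite ler_wpM2l; lra.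
    rewrite rhs; lra.
Qed.

Lemma sol_exponents : (sigma < -2 /\ p > -1 - sigma) \/ (sigma > -2 /\ p < -1 - sigma).
Proof.
have s0 := sigma_neq_Ntwo; have sq := sigma_neq_critical.
have : 0 < (sigma + 2) * ((1 - p) - (sigma + 2)).
  by rewrite lt_def exponent_sign mulf_neq0 // subr_eq0 eq_sym.
case: (ltgtP sigma (-2)) => [s_lt|s_gt|s_eq]; last by move: s0; rewrite s_eq addNr eqxx.
- by left; split => //; nra.
- by right; split => //; nra.
Qed.

End Solution.

Section PowerSolution.
Variable R : realType.

Lemma near_pos_eq (f g : R -> R) (x : R) : 0 < x ->
  (forall y, 0 < y -> f y = g y) -> \forall y \near x, f y = g y.
Proof.
move=> x0 H; near=> y; apply: H; near: y; exact: lt_nbhsr.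
Unshelve. all: by end_near.
Qed.

Lemma C2_pos_of_is_derive {v v1 v2 : R -> R} :
  (forall x : R, 0 < x -> is_derive x 1 v (v1 x)) ->
  (forall x : R, 0 < x -> is_derive x 1 v1 (v2 x)) ->
  (forall x : R, 0 < x -> derivable v2 x 1) ->
  C2_pos v /\ (forall x, 0 < x -> derive1 (derive1 v) x = v2 x).
Proof.
move=> h1 h2 h3.
have e1 (y : R) : 0 < y -> derive1 v y = v1 y.
  by move=> y0; rewrite derive1E; case: (h1 y y0).
have near1 (x : R) : 0 < x -> \forall y \near x, v1 y = derive1 v y.
  by move=> x0; apply: near_pos_eq => // y y0; rewrite e1.
have e2 (y : R) : 0 < y -> derive1 (derive1 v) y = v2 y.
  move=> y0; rewrite derive1E -(near_eq_derive _ (near1 y y0)).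
  by case: (h2 y y0).
split => // x x0; split; first by case: (h1 x x0).
  by apply: near_eq_derivable (near1 x x0) _; case: (h2 x x0).
apply/differentiable_continuous; rewrite -derivable1_diffP.
apply: (@near_eq_derivable _ _ _ v2); last exact: h3.
by apply: near_pos_eq => // y y0; rewrite e2.
Qed.

Lemma is_derive_scaled_powR (c a x : R) : 0 < x ->
  is_derive x 1 (fun y => c * powR y a) (c * a * powR x (a - 1)).
Proof.
move=> x0; have -> : (fun y => c * powR y a) = c \*: (@powR R ^~ a) by [].
by apply: is_derive_eq (is_deriveZ c (is_derive1_powR a x0)) _; rewrite -mulrA.
Qed.

Lemma power_solution (p sigma : R) :
  (sigma < -2 /\ p > -1 - sigma) \/ (sigma > -2 /\ p < -1 - sigma) ->
  exists u : R -> R, is_nontriv_nonneg_sol p sigma u.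
Proof.
move=> hc.
have p1 : 1 - p != 0 by apply/eqP => e; case: hc => -[]; lra.
set b := (sigma + 2) / (1 - p).
have bq : b * (1 - p) = sigma + 2 by rewrite /b divfK.
clearbody b.
have [b0 b1] : 0 < b /\ b < 1 by case: hc => -[] h1 h2; split; nra.
set m := b * (1 - b).
have m0 : 0 < m by rewrite /m mulr_gt0 // subr_gt0.
set C := powR m (p - 1)^-1.
have C0 : 0 < C by rewrite powR_gt0.
have Cp : powR C p = C * m.
  rewrite -[in LHS](subrK 1 p) powRD; last by rewrite (gt_eqF C0) implybT.
  rewrite powRr1 ?ltW // mulrC.
  rewrite /C -powRrM mulVf ?powRr1 ?ltW //.
  by apply: contraNneq p1 => /eqP; rewrite subr_eq0 => /eqP ->; rewrite subrr.
pose v y := C * powR y b.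
have d2 x : 0 < x -> derivable (fun y => C * b * (b - 1) * powR y (b - 1 - 1)) x 1.
  by move=> x0; have [] := is_derive_scaled_powR (C * b * (b - 1)) (b - 1 - 1) x x0.
have [hC2 hE] := C2_pos_of_is_derive (is_derive_scaled_powR C b)
  (is_derive_scaled_powR (C * b) (b - 1)) d2.
exists v; split => //.
- by move=> x x0; rewrite mulr_ge0 ?powR_ge0 // ltW.
- by exists 1; split => //; rewrite /v powR1 mulr1 gt_eqF.
- by move=> _ x x0; rewrite mulr_gt0 // powR_gt0.
- move=> x x0; rewrite hE // /v powRM ?powR_ge0 ?ltW // Cp -powRrM mulrCA.
  rewrite -powRD; last by rewrite (gt_eqF x0) implybT.
  have -> : sigma + b * p = b - 1 - 1 by rewrite -[sigma](addrK 2) -bq; ring.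
  by rewrite /m; ring.
Qed.

End PowerSolution.

Theorem theorem1p3 (R : realType) (p sigma : R) :
  (exists u : R -> R, is_nontriv_nonneg_sol p sigma u) <->
  ((sigma < -2 /\ p > -1 - sigma) \/ (sigma > -2 /\ p < -1 - sigma)).
Proof.
split; first by case=> u; exact: sol_exponents.
exact: power_solution.
Qed.
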